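(* Let $n\ge 4$ be even, let $K_n=(V,E)$ be the complete graph on $n$ nodes and let $P_{\mathrm{perfmatch}}(n)=\operatorname{conv}\{\chi(M): M \text{ a perfect matching in } K_n\}\subseteq\mathbb{R}^E$, whose circuits are taken with respect to the linear description $$\bm{x}(\delta(S))\ge 1\ \ \text{for all } S\subset V,\ |S|\text{ odd},\ |S|\ge 3;\qquad \bm{x}(\delta(v))=1\ \ \text{for all } v\in V;\qquad \bm{x}\ge\bm{0}.$$ Then $$\mathcal{CD}(P_{\mathrm{perfmatch}}(n))=\begin{cases}1 & n=4,6,\\ 2 & n=8,\\ 1 & n\ge 10.\end{cases}$$
   Context: $\chi(M)\in\{0,1\}^E$ is the characteristic vector of $M$; $\delta(S)$ is the set of edges with exactly one endpoint in $S$, $\delta(v)=\delta(\{v\})$, and $\bm{x}(F)=\sum_{e\in F}x_e$. Circuits: for a polytope $P=\{\bm{x}: A\bm{x}=\bm{b},\ B\bm{x}\le \bm{d}\}$ given by a fixed linear system, a nonzero vector $\bm{g}$ is a circuit of $P$ if $A\bm{g}=\bm{0}$ and $\operatorname{supp}(B\bm{g})$ is inclusion-minimal among the sets $\operatorname{supp}(B\bm{y})$ with $A\bm{y}=\bm{0}$, $\bm{y}\neq\bm{0}$ (inequalities of the form $\ge$ are rewritten as $\le$). A point $\bm{x}''\in P$ is one circuit step from $\bm{x}'\in P$ if $\bm{x}''=\bm{x}'+\alpha\bm{c}$ for a circuit $\bm{c}$ and $\alpha>0$ maximal such that $\bm{x}'+\alpha\bm{c}\in P$. A circuit walk of length $l$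 from $\bm{x}'$ to $\bm{x}''$ is a sequence $\bm{x}'=\bm{z}^0,\dots,\bm{z}^l=\bm{x}''$ in $P$ with each $\bm{z}^i$ one circuit step from $\bm{z}^{i-1}$; the circuit distance is the length of a shortest such walk, and the circuit diameter $\mathcal{CD}(P)$ is the maximum circuit distance over all ordered pairs of vertices of $P$. *)

From HB Require Import structures.
From mathcomp Require Import all_boot all_order all_algebra.
From mathcomp Require Import reals.
Set Implicit Arguments. Unset Strict Implicit. Unset Printing Implicit Defensive.
Import Order.TTheory GRing.Theory Num.Theory.
Local Open Scope ring_scope.

Definition edge (n : nat) := {e : 'I_n * 'I_n | (e.1 < e.2)%N}.

Definition incident n (v : 'I_n) (e : edge n) : bool :=
  ((val e).1 == v) || ((val e).2 == v).

Definition in_cut n (S : {set 'I_n}) (e : edge n) : bool :=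
  ((val e).1 \in S) != ((val e).2 \in S).

Definition perfect_matching n (M : {set edge n}) : Prop :=
  forall v : 'I_n, #|[set e in M | incident v e]| = 1%N.

Definition chi (R : realType) n (M : {set edge n}) : edge n -> R :=
  fun e => if e \in M then 1 else 0.

Definition in_Pperf (R : realType) n (x : edge n -> R) : Prop :=
  exists lam : {set edge n} -> R,
    (forall M, 0 <= lam M) /\
    (forall M, ~ perfect_matching M -> lam M = 0) /\
    \sum_M lam M = 1 /\
    (forall e, x e = \sum_M lam M * chi R M e).

Definition is_vertex (R : realType) n (x : edge n -> R) : Prop :=
  in_Pperf x /\
  forall y z : edge n -> R, in_Pperf y -> in_Pperf z ->
    forall t : R, 0 < t -> t < 1 ->
      (forall e, x e = t * y e + (1 - t) * z e) -> y = z.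

(* Linear description:
     x(delta(S)) >= 1   for S subset V, |S| odd, |S| >= 3     (rows inl S)
     x(delta(v)) = 1    for v in V                            (equalities A)
     x_e >= 0           for e in E                            (rows inr e)
   Inequality rows written as <= are -x(delta(S)) <= -1, -x_e <= 0. *)
Definition ineq_row n (r : {set 'I_n} + edge n) : bool :=
  match r with
  | inl T => [&& odd #|T|, (3 <= #|T|)%N & T \proper [set: 'I_n]]
  | inr _ => true
  end.

Definition Brow (R : realType) n (g : edge n -> R) (r : {set 'I_n} + edge n) : R :=
  match r with
  | inl T => - \sum_(e | in_cut T e) g e
  | inr e => - g e
  end.

Definition kerA (R : realType) n (g : edge n -> R) : Prop :=
  forall v : 'I_n, \sum_(e | incident v e) g e = 0.

Definition suppB (R : realType) n (g : edge n -> R) : {set {set 'I_n} + edge n} :=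
  [set r | ineq_row r && (Brow g r != 0)].

Definition nonzero (R : realType) n (g : edge n -> R) : Prop := exists e, g e != 0.

Definition circuit (R : realType) n (g : edge n -> R) : Prop :=
  kerA g /\ nonzero g /\
  forall y : edge n -> R, kerA y -> nonzero y ->
    suppB y \subset suppB g -> suppB y = suppB g.

Definition circuit_step (R : realType) n (x' x'' : edge n -> R) : Prop :=
  exists (c : edge n -> R) (alpha : R),
    circuit c /\ 0 < alpha /\
    in_Pperf (fun e => x' e + alpha * c e) /\
    (forall beta : R, alpha < beta -> ~ in_Pperf (fun e => x' e + beta * c e)) /\
    x'' = (fun e => x' e + alpha * c e).

Definition circuit_walk (R : realType) n (l : nat) (x y : edge n -> R) : Prop :=
  exists z : nat -> (edge n -> R),
    z 0%N = x /\ z l = y /\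
    (forall i, (i <= l)%N -> in_Pperf (z i)) /\
    (forall i, (i < l)%N -> circuit_step (z i) (z i.+1)).

Definition circuit_diameter_Pperf (R : realType) (n k : nat) : Prop :=
  (forall x y : edge n -> R, is_vertex x -> is_vertex y ->
     exists2 l, (l <= k)%N & circuit_walk l x y) /\
  (exists x y : edge n -> R, is_vertex x /\ is_vertex y /\
     forall l, (l < k)%N -> ~ circuit_walk l x y).

From HB Require Import structures.
From mathcomp Require Import all_boot all_order all_algebra.
From mathcomp Require Import reals.
From mathcomp Require Import perm zify.
From Stdlib Require Import Classical FunctionalExtensionality.
Set Implicit Arguments. Unset Strict Implicit. Unset Printing Implicit Defensive.
Import Order.TTheory GRing.Theory Num.Theory.
Local Open Scope ring_scope.

(* Perfect matchings of K_n are the matchings M(f) of fixed-point-free involutions f,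
   and the vertices of the polytope are their characteristic vectors.  For two such
   involutions f, f' consider g = chi(M(f')) - chi(M(f)) and the set D of vertices
   where f and f' disagree.  If a, b in D have eight distinct "neighbours"
   a, fa, b, f'b, f'a, f'fa, fb, ff'b and some vertex w lies outside them, then
   S = {a, fa, b, f'b, w} is an odd set whose cut constraint is not in the support of
   B g; so any kernel direction y with supp(B y) inside supp(B g) takes opposite values
   on the edges {a, fa} and {b, f'b}.  With the degree equations at every vertex of D
   this makes y a multiple of g, i.e. g is a circuit and one step reaches M(f').
   Such a w always exists when n >= 10, and the eight neighbours cannot be distinct
   when |D| < 8, in particular when n <= 6.  For n = 8 the failure of the condition
   forces a, fa, f'a, f'fa to be an alternating 4-cycle; switching f to f' on it gives
   an intermediate matching reachable in one step from both ends.  Conversely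
   (01)(23)(45)(67) and (03)(12)(47)(56) are two steps apart, because the difference
   of the first one and (03)(12)(45)(67) has strictly smaller support. *)

Lemma sumr_single (I : finType) (V : nmodType) (P : pred I) (F : I -> V) i :
  P i -> (forall j, P j -> j != i -> F j = 0) -> \sum_(j | P j) F j = F i.
Proof. by move=> Pi F0; rewrite (bigD1 i) //= big1 ?addr0 // => j /andP[]; apply: F0. Qed.

Lemma sumr_pair (I : finType) (V : nmodType) (P : pred I) (F : I -> V) i1 i2 :
  P i1 -> P i2 -> i1 != i2 -> (forall j, P j -> j != i1 -> j != i2 -> F j = 0) ->
  \sum_(j | P j) F j = F i1 + F i2.
Proof.
move=> P1 P2 i12 F0; rewrite (bigD1 i1) //= (sumr_single (i := i2)) ?P2 1?eq_sym //.
by move=> j /andP[Pj ji1] ji2; apply: F0.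
Qed.

Section CompleteGraph.
Variable n : nat.
Implicit Types (a b v : 'I_n) (e : edge n) (S : {set 'I_n}).

Lemma edge_ends_neq e : (val e).1 != (val e).2.
Proof. by case: e => [[a b] /= h]; rewrite neq_ltn h. Qed.

Lemma incidentE v e : incident v e = (v == (val e).1) || (v == (val e).2).
Proof. by rewrite /incident ![_ == v]eq_sym. Qed.

Lemma edge_eq_incident a b e e' : a != b ->
  incident a e -> incident b e -> incident a e' -> incident b e' -> e = e'.
Proof.
move=> ab; case: e => [[x1 x2] /= h]; case: e' => [[y1 y2] /= h'].
rewrite /incident /= => /orP[]/eqP ea /orP[]/eqP eb /orP[]/eqP ea' /orP[]/eqP eb';
  subst; first [by rewrite eqxx in ab | by apply: val_inj
               | by move: (ltn_trans h h'); rewrite ltnn].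
Qed.

Lemma exists_edge a b : a != b -> exists e, incident a e && incident b e.
Proof.
move=> ab; case: (ltngtP a b) => h.
- by exists (exist _ (a, b) h : edge n); rewrite /incident /= !eqxx orbT.
- by exists (exist _ (b, a) h : edge n); rewrite /incident /= !eqxx orbT.
- by move: ab; rewrite (val_inj h) eqxx.
Qed.

Definition within S e := ((val e).1 \in S) && ((val e).2 \in S).

Lemma ends_incident a b e : a != b -> incident a e -> incident b e ->
  ((val e).1 = a /\ (val e).2 = b) \/ ((val e).1 = b /\ (val e).2 = a).
Proof.
rewrite /incident => ab /orP[]/eqP A /orP[]/eqP B; try by [left | right].
all: by move: ab; rewrite -A -B eqxx.
Qed.

Lemma in_cut_ends S a b e : a != b -> incident a e -> incident b e ->
  in_cut S e = ((a \in S) != (b \in S)).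
Proof.
by move=> ab ae be; rewrite /in_cut; case: (ends_incident ab ae be) => -[-> ->] //;
  rewrite eq_sym.
Qed.

Lemma within_ends S a b e : a != b -> incident a e -> incident b e ->
  within S e = (a \in S) && (b \in S).
Proof.
by move=> ab ae be; rewrite /within; case: (ends_incident ab ae be) => -[-> ->] //;
  rewrite andbC.
Qed.

Lemma sum_eq_mem S (x : 'I_n) : (\sum_(v in S) (v == x) = (x \in S))%N.
Proof.
rewrite big_mkcond (bigD1 x) //= eqxx big1 ?addn0 => [|v /negbTE ->]; last by case: ifP.
by case: ifP.
Qed.

Lemma sum_incident (V : nmodType) S (h : edge n -> V) :
  \sum_(v in S) \sum_(e | incident v e) h e =
  \sum_e h e *+ (((val e).1 \in S) + ((val e).2 \in S)).
Proof.
under eq_bigr do rewrite big_mkcond /=.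
rewrite exchange_big /=; apply: eq_bigr => e _.
under eq_bigr do rewrite -mulrb.
rewrite sumrMnr; congr (_ *+ _).
rewrite -!sum_eq_mem -big_split /=; apply: eq_bigr => v _.
rewrite incidentE; have ne := edge_ends_neq e.
by have [->|_] := eqVneq v (val e).1; [move: ne; case: eqP | case: (v == _)].
Qed.

Definition fpf_involution (f : 'I_n -> 'I_n) := involutive f /\ forall v, f v != v.

Definition matching_of (f : 'I_n -> 'I_n) : {set edge n} :=
  [set e | f (val e).1 == (val e).2].

Lemma matching_of_ends f a b e : involutive f -> a != b ->
  incident a e -> incident b e -> (e \in matching_of f) = (f a == b).
Proof.
move=> ff ab ae be; rewrite inE.
case: (ends_incident ab ae be) => -[-> ->] //.
by apply/eqP/eqP => <-; rewrite ff.
Qed.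

Lemma incident_matching_of f v e : involutive f ->
  incident v e -> e \in matching_of f -> incident (f v) e.
Proof.
move=> ff; rewrite inE /incident => /orP[]/eqP <- /eqP E.
  by rewrite E eqxx orbT.
by rewrite -E ff eqxx.
Qed.

Lemma matching_of_at f v e e0 : involutive f -> v != f v ->
  incident v e0 -> incident (f v) e0 -> e \in matching_of f -> incident v e -> e = e0.
Proof.
move=> ff vf ve0 fve0 eM ve.
exact: edge_eq_incident vf ve (incident_matching_of ff ve eM) ve0 fve0.
Qed.

Lemma perfect_matching_of f : fpf_involution f -> perfect_matching (matching_of f).
Proof.
move=> [ff fN] v; have vf : v != f v by rewrite eq_sym fN.
have [e /andP[ve fe]] := exists_edge vf.
suff -> : [set e' in matching_of f | incident v e'] = [set e] by rewrite cards1.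
apply/setP => e'; rewrite in_set1 [e' \in [set _ in _ | _]]inE; apply/andP/eqP.
- case=> e'M ve'; apply: (edge_eq_incident vf) => //.
  exact: incident_matching_of.
- by move=> ->; rewrite (matching_of_ends ff vf).
Qed.

Lemma perfect_matching_uniq M v e e' : perfect_matching M ->
  e \in M -> e' \in M -> incident v e -> incident v e' -> e = e'.
Proof.
move=> pm eM e'M ve ve'; have /eqP/cards1P[e0 E] := pm v.
have : e \in [set e in M | incident v e] by rewrite inE eM.
have : e' \in [set e in M | incident v e] by rewrite inE e'M.
by rewrite E !inE => /eqP -> /eqP ->.
Qed.

Lemma perfect_matching_cover M v : perfect_matching M ->
  exists2 e, e \in M & incident v e.
Proof.
move=> pm; have /eqP/cards1P[e0 E] := pm v.
have : e0 \in [set e in M | incident v e] by rewrite E set11.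
by rewrite inE => /andP[]; exists e0.
Qed.

Definition other_end e v : 'I_n := if (val e).1 == v then (val e).2 else (val e).1.

Lemma other_endP e v : incident v e ->
  [/\ incident (other_end e v) e, other_end e v != v & other_end e (other_end e v) = v].
Proof.
have ne := edge_ends_neq e; rewrite /incident /other_end => /orP[]/eqP <-.
- by rewrite !eqxx orbT (negbTE ne) eq_sym ne.
- by rewrite eq_sym (negbTE ne) !eqxx.
Qed.

Lemma perfect_matching_involution M : perfect_matching M ->
  exists2 f, fpf_involution f & M = matching_of f.
Proof.
move=> pm.
pose f v := if [pick e in M | incident v e] is Some e then other_end e v else v.
have fP v : exists e, [/\ e \in M, incident v e & f v = other_end e v].
  rewrite /f; case: pickP => [e /andP[eM ve] | none]; first by exists e.
  by have [e eM ve] := perfect_matching_cover v pm; move: (none e); rewrite eM ve.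
have ff : involutive f.
  move=> v; have [e [eM ve ->]] := fP v; have [oe _ ooe] := other_endP ve.
  have [e' [e'M ve' ->]] := fP (other_end e v).
  by rewrite (perfect_matching_uniq pm e'M eM ve' oe).
have fN v : f v != v by have [e [_ ve ->]] := fP v; have [] := other_endP ve.
exists f => //; apply/setP => e; rewrite inE.
have e1 : incident (val e).1 e by rewrite /incident eqxx.
have e2 : incident (val e).2 e by rewrite /incident eqxx orbT.
have [e' [e'M ve' ->]] := fP (val e).1; have [oe _ _] := other_endP ve'.
apply/idP/eqP => [eM | E].
- by rewrite (perfect_matching_uniq pm e'M eM ve' e1) /other_end eqxx.
- by rewrite -(edge_eq_incident (edge_ends_neq e) ve' _ e1 e2) // -E.
Qed.

End CompleteGraph.

Section Polytope.
Variables (R : realType) (n : nat).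
Implicit Types (x y z : edge n -> R) (M : {set edge n}).

Lemma sum_chi M (P : pred (edge n)) :
  \sum_(e | P e) chi R M e = (#|[set e in M | P e]|)%:R.
Proof.
rewrite /chi -big_mkcondr /= -sumr_const; apply: eq_bigl => e.
by rewrite !inE andbC.
Qed.

Lemma chi_matching_of_ends (f : 'I_n -> 'I_n) a b e : involutive f -> a != b ->
  incident a e -> incident b e -> chi R (matching_of f) e = (f a == b)%:R.
Proof. by move=> ff ab ae be; rewrite /chi (matching_of_ends ff ab ae be); case: eqP. Qed.

Lemma in_Pperf_ge0 x : in_Pperf x -> forall e, 0 <= x e.
Proof.
case=> lam [lam0 [_ [_ xE]]] e; rewrite xE; apply: sumr_ge0 => M _.
by apply: mulr_ge0 => //; rewrite /chi; case: ifP.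
Qed.

Lemma in_Pperf_degree x : in_Pperf x -> forall v, \sum_(e | incident v e) x e = 1.
Proof.
case=> lam [_ [lamPM [<- xE]]] v.
rewrite (eq_bigr _ (fun e _ => xE e)) exchange_big /=.
apply: eq_bigr => M _; rewrite -mulr_sumr sum_chi.
have [pm | npm] := classic (perfect_matching M); first by rewrite pm mulr1.
by rewrite lamPM // mul0r.
Qed.

Lemma chi_in_Pperf M : perfect_matching M -> in_Pperf (chi R M).
Proof.
move=> pm; exists (fun M0 => (M0 == M)%:R); split; [|split; [|split]].
- by move=> M0; rewrite ler0n.
- by move=> M0 npm; case: eqP => // E; case: npm; rewrite E.
- by rewrite (bigD1 M) //= eqxx big1 ?addr0 // => M0 /negbTE ->.
- move=> e; rewrite (bigD1 M) //= eqxx mul1r big1 ?addr0 // => M0 /negbTE ->.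
  by rewrite mul0r.
Qed.

Lemma in_Pperf_eq_chi M x : perfect_matching M -> in_Pperf x ->
  (forall e, e \notin M -> x e = 0) -> x = chi R M.
Proof.
move=> pm xP x0; apply: functional_extensionality => e.
case eM: (e \in M); rewrite /chi eM; last by apply: x0; rewrite eM.
have := in_Pperf_degree xP (val e).1.
rewrite (bigD1 e) /= ?/incident ?eqxx // big1 ?addr0 // => e' /andP[ve' ne'].
apply: x0; apply: contra ne' => e'M; apply/eqP.
by apply: (perfect_matching_uniq pm e'M eM ve'); rewrite /incident eqxx.
Qed.

Lemma chi_is_vertex M : perfect_matching M -> is_vertex (chi R M).
Proof.
move=> pm; split; first exact: chi_in_Pperf.
move=> y z yP zP t t0 t1 E.
have off e : e \notin M -> y e = 0 /\ z e = 0.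
  move=> eM; have := E e; rewrite /chi (negbTE eM) => /esym/eqP.
  have ty : 0 <= t * y e by rewrite mulr_ge0 ?(ltW t0) ?(in_Pperf_ge0 yP).
  have tz : 0 <= (1 - t) * z e by rewrite mulr_ge0 ?subr_ge0 ?(ltW t1) ?(in_Pperf_ge0 zP).
  rewrite paddr_eq0 // !mulf_eq0 subr_eq0 (gt_eqF t0) [1 == t]eq_sym (lt_eqF t1).
  by case/andP => /eqP ? /eqP.
rewrite (in_Pperf_eq_chi pm yP) => [|e /off[]//].
by rewrite (in_Pperf_eq_chi pm zP) // => e /off[].
Qed.

Lemma in_Pperf_normalize (lam : {set edge n} -> R) :
  (forall M, 0 <= lam M) -> (forall M, ~ perfect_matching M -> lam M = 0) ->
  0 < \sum_M lam M -> in_Pperf (fun e => (\sum_M lam M * chi R M e) / \sum_M lam M).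
Proof.
move=> lam0 lamPM s0; exists (fun M => lam M / \sum_M lam M); split; [|split; [|split]].
- by move=> M; rewrite divr_ge0 ?(ltW s0).
- by move=> M /lamPM ->; rewrite mul0r.
- by rewrite -mulr_suml divff ?gt_eqF.
- by move=> e; rewrite mulr_suml; apply: eq_bigr => M _; rewrite mulrAC.
Qed.

Lemma in_Pperf_split x : in_Pperf x -> exists2 M, perfect_matching M &
  x = chi R M \/ exists z t, [/\ in_Pperf z, 0 < t, t < 1 &
                                forall e, x e = t * chi R M e + (1 - t) * z e].
Proof.
case=> lam [lam0 [lamPM [lam1 xE]]].
have [M lamM] : exists M, 0 < lam M.
  apply: NNPP => none; move: lam1; rewrite big1 => [/eqP|M _].
    by rewrite eq_sym oner_eq0.
  by apply/eqP; rewrite eq_le lam0 andbT leNgt; apply/negP => ?; apply: none; exists M.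
have pm : perfect_matching M by apply: NNPP => /lamPM lamM0; rewrite lamM0 ltxx in lamM.
exists M => //; set t := lam M; pose rest M0 := if M0 == M then 0 else lam M0.
have split_M (F : {set edge n} -> R) :
    \sum_M0 F M0 = F M + \sum_M0 (if M0 == M then 0 else F M0).
  rewrite (bigD1 M) //= [X in _ = _ + X](bigD1 M) //= eqxx add0r; congr (_ + _).
  by apply: eq_bigr => M0 /negbTE ->.
have restE : \sum_M0 rest M0 = 1 - t by rewrite -lam1 split_M addrC addKr.
have xE' e : x e = t * chi R M e + \sum_M0 rest M0 * chi R M0 e.
  rewrite xE split_M; congr (_ + _); apply: eq_bigr => M0 _.
  by rewrite /rest; case: ifP; rewrite ?mul0r.
have rest0 M0 : 0 <= rest M0 by rewrite /rest; case: ifP.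
have [t1 | t_neq1] := eqVneq t 1.
  left; apply: functional_extensionality => e; rewrite xE' t1 mul1r big1 ?addr0 // => M0 _.
  have /psumr_eq0P -> // : \sum_M0 rest M0 = 0 by rewrite restE t1 subrr.
  by rewrite mul0r.
have t_lt1 : t < 1 by rewrite lt_neqAle t_neq1 -subr_ge0 -restE sumr_ge0.
right; exists (fun e => (\sum_M0 rest M0 * chi R M0 e) / \sum_M0 rest M0), t; split => //.
- apply: in_Pperf_normalize => // [M0 /lamPM|]; first by rewrite /rest; case: ifP.
  by rewrite restE subr_gt0.
- by move=> e; rewrite xE' restE mulrCA divff ?mulr1 // subr_eq0 eq_sym.
Qed.

Lemma vertex_is_chi x : is_vertex x -> exists2 M, perfect_matching M & x = chi R M.
Proof.
case=> xP extreme; have [M pm [-> | [z [t [zP t0 t1 xE]]]]] := in_Pperf_split xP.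
  by exists M.
exists M => //; have Mz := extreme _ _ (chi_in_Pperf pm) zP t t0 t1 xE.
by apply: functional_extensionality => e; rewrite xE -Mz -mulrDl subrKC mul1r.
Qed.

End Polytope.

Section CircuitWalks.
Variables (R : realType) (n : nat).
Implicit Types (x y w c : edge n -> R).

Lemma circuit_walk_refl x : in_Pperf x -> circuit_walk 0 x x.
Proof. by exists (fun _ => x). Qed.

Lemma circuit_walk_step x y : in_Pperf x -> circuit_step x y -> circuit_walk 1 x y.
Proof.
move=> xP s; have yP : in_Pperf y by case: s => c [al [_ [_ [? [_ ->]]]]].
by exists (fun i => if i == 0%N then x else y); split=> //; split=> //; split; case.
Qed.

Lemma circuit_walk_cat l1 l2 x y w :
  circuit_walk l1 x y -> circuit_walk l2 y w -> circuit_walk (l1 + l2) x w.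
Proof.
case=> z1 [z10 [z1l [z1P z1s]]]; case=> z2 [z20 [z2l [z2P z2s]]].
exists (fun i => if (i <= l1)%N then z1 i else z2 (i - l1)%N).
split; first by rewrite leq0n.
split.
  case: leqP => h; last by rewrite addKn.
  have l20 : l2 = 0%N by lia.
  by subst l2; rewrite addn0 z1l -z20 z2l.
split=> i hi.
  by case: leqP => h; [exact: z1P | apply: z2P; lia].
case: (ltngtP i l1) => h.
- exact: z1s.
- by rewrite subSn; [apply: z2s|]; lia.
- by rewrite h z1l -z20 subSn // subnn; apply: z2s; lia.
Qed.

Lemma circuit_walk0_eq x y : circuit_walk 0 x y -> x = y.
Proof. by case=> z [<- [<- _]]. Qed.

Lemma circuit_walk1_step x y : circuit_walk 1 x y -> circuit_step x y.
Proof. by case=> z [<- [<- [_ /(_ 0%N isT)]]]. Qed.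

Lemma suppB_scale c k : k != 0 -> suppB (fun e => k * c e) = suppB c.
Proof.
move=> k0; apply/setP => r; rewrite !inE; congr (_ && _).
by case: r => [T|e] /=; rewrite -?mulr_sumr !oppr_eq0 mulf_eq0 (negbTE k0).
Qed.

Lemma circuit_scale c k : k != 0 -> circuit c -> circuit (fun e => k * c e).
Proof.
move=> k0 [cA [[e0 ce0] cmin]]; split.
  by move=> v; rewrite -mulr_sumr cA mulr0.
split; first by exists e0; rewrite mulf_neq0.
by rewrite suppB_scale.
Qed.

Lemma circuit_step_diff x y : circuit_step x y -> circuit (fun e => y e - x e).
Proof.
case=> c [al [cc [al0 [_ [_ ->]]]]].
have -> : (fun e => x e + al * c e - x e) = (fun e => al * c e).
  by apply: functional_extensionality => e; rewrite addrC addKr.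
exact: circuit_scale (lt0r_neq0 al0) cc.
Qed.

Lemma circuit_step_chi (M M' : {set edge n}) :
  perfect_matching M -> perfect_matching M' -> ~~ (M \subset M') ->
  circuit (fun e => chi R M' e - chi R M e) -> circuit_step (chi R M) (chi R M').
Proof.
move=> pm pm' /subsetPn[e0 e0M e0M'] cc.
exists (fun e => chi R M' e - chi R M e), 1; split => //; split => //.
have -> : (fun e => chi R M e + 1 * (chi R M' e - chi R M e)) = chi R M'.
  by apply: functional_extensionality => e; rewrite mul1r addrC subrK.
split; first exact: chi_in_Pperf.
split=> // beta beta_gt1 /in_Pperf_ge0 /(_ e0).
rewrite /chi e0M (negbTE e0M') sub0r mulrN1 subr_ge0 => /(lt_le_trans beta_gt1).
by rewrite ltxx.
Qed.

End CircuitWalks.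

Section Cuts.
Variables (R : realType) (n : nat).
Implicit Types (y z : edge n -> R) (S : {set 'I_n}).

Definition at_pair y (a b : 'I_n) := \sum_(e | incident a e && incident b e) y e.

Lemma at_pair_edge y a b e : a != b -> incident a e -> incident b e -> at_pair y a b = y e.
Proof.
move=> ab ae be; apply: sumr_single => [|e' /andP[ae' be'] /eqP[]]; first by rewrite ae.
exact: (edge_eq_incident ab).
Qed.

Lemma at_pairC y a b : at_pair y a b = at_pair y b a.
Proof. by apply: eq_bigl => e; rewrite andbC. Qed.

Lemma cut_sum_kerA z S : kerA z ->
  \sum_(e | in_cut S e) z e = - ((\sum_(e | within S e) z e) *+ 2).
Proof.
move=> zA; apply/eqP; rewrite -addr_eq0 -sumrMnl.
have := sum_incident S z; rewrite big1 => [E|v _]; last exact: zA.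
apply/eqP; rewrite [RHS]E (big_mkcond (in_cut S)) (big_mkcond (within S)) -big_split /=.
apply: eq_bigr => e _; rewrite /in_cut /within.
by case: (_ \in S); case: (_ \in S); rewrite /= ?addr0 ?add0r.
Qed.

Lemma cut_sum_chi (f : 'I_n -> 'I_n) S : fpf_involution f ->
  \sum_(e | in_cut S e) chi R (matching_of f) e = (\sum_(x in S) (f x \notin S))%:R.
Proof.
move=> [ff fN]; pose h e := if in_cut S e then chi R (matching_of f) e else 0.
have := sum_incident S h.
have -> : \sum_e h e *+ (((val e).1 \in S) + ((val e).2 \in S)) =
    \sum_(e | in_cut S e) chi R (matching_of f) e.
  rewrite [RHS]big_mkcond /=; apply: eq_bigr => e _; rewrite /h /in_cut.
  by case: (_ \in S); case: (_ \in S); rewrite /= ?mul0rn ?mulr1n.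
move=> <-; rewrite natr_sum; apply: eq_bigr => v vS.
have vf : v != f v by rewrite eq_sym fN.
have [e /andP[ve fe]] := exists_edge vf.
rewrite (sumr_single (i := e) ve) => [|e' ve' e'e].
  rewrite /h (in_cut_ends S vf ve fe) vS /chi (matching_of_ends ff vf ve fe) eqxx.
  by case: (f v \in S).
rewrite /h /chi; case: (in_cut S e') => //; case: ifP => // e'M.
by case/eqP: e'e; apply: (edge_eq_incident vf ve' (incident_matching_of ff ve' e'M) ve fe).
Qed.

End Cuts.

Section MatchingDifference.
Variables (R : realType) (n : nat) (f f' : 'I_n -> 'I_n).
Hypotheses (fI : fpf_involution f) (f'I : fpf_involution f').

Definition match_diff e := chi R (matching_of f') e - chi R (matching_of f) e.

Lemma kerA_match_diff : kerA match_diff.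
Proof.
move=> v; rewrite sumrB.
by rewrite !(in_Pperf_degree (chi_in_Pperf R (perfect_matching_of _))) // subrr.
Qed.

Lemma match_diff_f a e : f a != f' a -> incident a e -> incident (f a) e ->
  match_diff e = -1.
Proof.
move=> Da ae fae; have afa : a != f a by rewrite eq_sym fI.2.
rewrite /match_diff /chi (matching_of_ends fI.1 afa ae fae).
by rewrite (matching_of_ends f'I.1 afa ae fae) eqxx eq_sym (negbTE Da) sub0r.
Qed.

Lemma match_diff_f' a e : f a != f' a -> incident a e -> incident (f' a) e ->
  match_diff e = 1.
Proof.
move=> Da ae fae; have afa : a != f' a by rewrite eq_sym f'I.2.
rewrite /match_diff /chi (matching_of_ends fI.1 afa ae fae).
by rewrite (matching_of_ends f'I.1 afa ae fae) eqxx (negbTE Da) subr0.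
Qed.

Lemma match_diff_eq0 e :
  (e \in matching_of f) = (e \in matching_of f') -> match_diff e = 0.
Proof. by rewrite /match_diff /chi => ->; rewrite subrr. Qed.

End MatchingDifference.

Lemma pentagon_closed n (f : 'I_n -> 'I_n) (a b b' w x : 'I_n) :
  involutive f -> (forall v, f v != v) -> f b != b' -> w != f b -> w != f b' ->
  x \in [:: w; a; f a; b; b'] -> f x \in [:: w; a; f a; b; b'] -> (x == a) || (x == f a).
Proof.
move=> ff fN /eqP fbb' /eqP wfb /eqP wfb'; rewrite !inE => xS fxS.
apply/norP => -[/eqP xa /eqP xfa].
have fN' v : f v <> v by apply/eqP.
have := ff x; have := ff b; have := ff b'; have := fN' x; have := fN' b; have := fN' b'.
move=> *; case/orP: xS => [|/or4P[]] /eqP X; case/orP: fxS => [|/or4P[]] /eqP FX;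
  congruence.
Qed.

Lemma matching_of_within n (f : 'I_n -> 'I_n) (S : {set 'I_n}) (a b b' w : 'I_n) e e1 :
  involutive f -> (forall v, f v != v) -> f b != b' -> w != f b -> w != f b' ->
  {subset S <= [:: w; a; f a; b; b']} -> incident a e1 -> incident (f a) e1 ->
  within S e -> e \in matching_of f -> e = e1.
Proof.
move=> ff fN fbb' wfb wfb' sub ae1 fae1 /andP[S1 S2] eM.
have afa : a != f a by rewrite eq_sym fN.
have xe : incident (val e).1 e by rewrite /incident eqxx.
have fxe := incident_matching_of ff xe eM.
have fS : f (val e).1 \in [:: w; a; f a; b; b'].
  by move: eM; rewrite inE => /eqP ->; apply: sub.
have /orP[/eqP ea | /eqP ea] := pentagon_closed ff fN fbb' wfb wfb' (sub _ S1) fS.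
  by rewrite ea in xe fxe; apply: (edge_eq_incident afa).
by rewrite ea ff in xe fxe; apply: (edge_eq_incident afa).
Qed.

Section Neighbourhood.
Variables (n : nat) (f f' : 'I_n -> 'I_n).

Definition corners (a b : 'I_n) := [:: a; f a; b; f' b].

Definition nbhd (a b : 'I_n) := corners a b ++ [:: f' a; f' (f a); f b; f (f' b)].

Definition has_spare_vertex := forall a b, f a != f' a -> f b != f' b ->
  uniq (nbhd a b) -> exists w, w \notin nbhd a b.

Hypotheses (fI : fpf_involution f) (f'I : fpf_involution f').

Lemma disagree_f x : f x != f' x -> f (f x) != f' (f x).
Proof. by rewrite fI.1; apply: contra => /eqP {2}->; rewrite f'I.1. Qed.

Lemma disagree_f' x : f x != f' x -> f (f' x) != f' (f' x).
Proof. by rewrite f'I.1; apply: contra => /eqP {1}<-; rewrite fI.1. Qed.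

Lemma nbhd_uniqE a b : f a != f' a -> f b != f' b ->
  uniq (nbhd a b) = [&& a != b, a != f' b, f a != b, f a != f' b,
                        f' a != f b, f' a != f (f' b), f' (f a) != f b & f' (f a) != f (f' b)].
Proof.
move=> Da Db; rewrite /nbhd /corners /= !inE !negb_or; apply/idP/idP => U.
all: repeat match goal with H : is_true (_ && _) |- _ => case/andP: H => ? ? end.
  by repeat (apply/andP; split).
repeat match goal with H : is_true (_ != _) |- _ => move/eqP: H => ? end.
have [ff fN] := fI; have [ff' f'N] := f'I.
have fN' v : f v <> v by apply/eqP.
have f'N' v : f' v <> v by apply/eqP.
have := ff a; have := ff (f' a); have := ff b; have := ff (f' b).
have := ff' a; have := ff' (f a); have := ff' b; have := ff' (f b).
have := fN' a; have := fN' b; have := f'N' a; have := f'N' b.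
move=> *.
by repeat (apply/andP; split); try (apply/eqP; congruence).
Qed.

Definition pentagon a b w : {set 'I_n} := [set x in w :: corners a b].

Lemma pentagon_ineq_row a b w :
  uniq (nbhd a b) -> w \notin nbhd a b -> ineq_row (inl (pentagon a b w)).
Proof.
rewrite /nbhd cat_uniq mem_cat negb_or => /and3P[Uc /hasPn out _] /andP[wc wo].
have f'a_out : f' a \notin pentagon a b w.
  rewrite inE in_cons negb_or (out (f' a)) ?andbT ?inE ?eqxx //.
  by move: wo; rewrite inE negb_or eq_sym => /andP[].
rewrite /= cardsE (card_uniqP _) /= ?wc //; apply/properP; split; first exact: subsetT.
by exists (f' a).
Qed.

Lemma nbhd_cover_le8 a b : (forall w, w \in nbhd a b) -> (n <= 8)%N.
Proof.
move=> cover; rewrite -(size_enum_ord n) -[8%N]/(size (nbhd a b)).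
by apply: uniq_leq_size (enum_uniq _) _ => x _.
Qed.

Lemma not_has_spare_vertex : ~ has_spare_vertex -> exists a b,
  [/\ f a != f' a, f b != f' b, uniq (nbhd a b) & forall w, w \in nbhd a b].
Proof.
move=> not_spare; apply: NNPP => none; apply: not_spare => a b Da Db U.
apply: NNPP => no_w; apply: none; exists a, b; split=> // w.
by apply/negPn/negP => wN; apply: no_w; exists w.
Qed.

Lemma nbhd_cover_commute a b : f a != f' a -> f b != f' b ->
  uniq (nbhd a b) -> (forall w, w \in nbhd a b) -> f (f' a) = f' (f a).
Proof.
move=> Da Db; rewrite nbhd_uniqE // => U cover.
repeat match goal with H : is_true (_ && _) |- _ => case/andP: H => ? ? end.
repeat match goal with H : is_true (_ != _) |- _ => move/eqP: H => ? end.
have [ff fN] := fI; have [ff' f'N] := f'I.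
have := ff (f' a); have := ff' a; have := ff b; have := ff (f' b).
have := fN (f' a); have := f'N a.
move=> /eqP ? /eqP ? *.
have := cover (f (f' a)); rewrite !inE.
by case/or4P => [|||/or4P[|||/orP[]]] /eqP E; congruence.
Qed.

Lemma disagreement_const (T : Type) (phi : 'I_n -> T) : has_spare_vertex ->
  (forall x, phi (f x) = phi x) -> (forall x, f x != f' x -> phi (f' x) = phi x) ->
  (forall a b w, f a != f' a -> f b != f' b -> uniq (nbhd a b) -> w \notin nbhd a b ->
     phi a = phi b) ->
  forall a b, f a != f' a -> f b != f' b -> phi a = phi b.
Proof.
move=> spare phi_f phi_f' phi_ab a b Da Db.
have phi_ff' := phi_f' _ (disagree_f Da); have phi_f'b := phi_f' _ Db.
have [->|h1] := eqVneq a b; first by [].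
have [->|h2] := eqVneq a (f' b); first by rewrite phi_f'b.
have [<-|h3] := eqVneq (f a) b; first by rewrite phi_f.
have [E|h4] := eqVneq (f a) (f' b); first by rewrite -phi_f E phi_f'b.
have [E|h5] := eqVneq (f' a) (f b); first by rewrite -(phi_f' _ Da) E phi_f.
have [E|h6] := eqVneq (f' a) (f (f' b)); first by rewrite -(phi_f' _ Da) E phi_f phi_f'b.
have [E|h7] := eqVneq (f' (f a)) (f b); first by rewrite -phi_f -phi_ff' E phi_f.
have [E|h8] := eqVneq (f' (f a)) (f (f' b)).
  by rewrite -phi_f -phi_ff' E phi_f phi_f'b.
have U : uniq (nbhd a b) by rewrite nbhd_uniqE // h1 h2 h3 h4 h5 h6 h7 h8.
by have [w nw] := spare a b Da Db U; apply: phi_ab nw.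
Qed.

End Neighbourhood.

Section CircuitCriterion.
Variables (R : realType) (n : nat) (f f' : 'I_n -> 'I_n).
Hypotheses (fI : fpf_involution f) (f'I : fpf_involution f').
Local Notation g := (match_diff R f f').
Lemma match_diff_pentagon a b w e e1 e2 :
  f a != f' a -> f b != f' b -> w \notin nbhd f f' a b ->
  incident a e1 -> incident (f a) e1 -> incident b e2 -> incident (f' b) e2 ->
  within (pentagon f f' a b w) e -> e != e1 -> e != e2 -> g e = 0.
Proof.
move=> Da Db wN ae1 fae1 be2 fbe2 Se ne1 ne2.
move: wN; rewrite /nbhd /corners mem_cat !inE !negb_or.
case/andP=> /and4P[_ _ _ _] /and4P[wf'a wf'fa wfb wff'b].
have eM : e \notin matching_of f.
  apply: contra ne1 => inM; apply/eqP.
  by apply: (matching_of_within fI.1 fI.2 Db wfb wff'b _ ae1 fae1 Se inM) => x; rewrite inE.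
have eM' : e \notin matching_of f'.
  apply: contra ne2 => inM; apply/eqP; rewrite eq_sym in Da.
  apply: (matching_of_within f'I.1 f'I.2 Da wf'a wf'fa _ be2 fbe2 Se inM) => x.
  by rewrite !inE; do 5!case: (x == _).
by apply: match_diff_eq0; rewrite (negbTE eM) (negbTE eM').
Qed.

Variable y : edge n -> R.
Hypotheses (yA : kerA y) (y_edge : forall e, g e = 0 -> y e = 0).
Hypothesis y_cut : forall S, ineq_row (inl S) ->
  \sum_(e | in_cut S e) g e = 0 -> \sum_(e | in_cut S e) y e = 0.

Lemma at_pair_degree x : f x != f' x -> at_pair y x (f x) + at_pair y x (f' x) = 0.
Proof.
move=> Dx; have xf : x != f x by rewrite eq_sym fI.2.
have xf' : x != f' x by rewrite eq_sym f'I.2.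
have [e1 /andP[x1 f1]] := exists_edge xf; have [e2 /andP[x2 f2]] := exists_edge xf'.
rewrite (at_pair_edge _ xf x1 f1) (at_pair_edge _ xf' x2 f2).
have e12 : e1 != e2.
  apply: contra Dx => /eqP E.
  by rewrite -(matching_of_ends fI.1 xf' x2 f2) -E (matching_of_ends fI.1 xf x1 f1).
rewrite -(yA x) (sumr_pair x1 x2 e12) // => e xe ne1 ne2; apply/y_edge/match_diff_eq0.
have eM : e \notin matching_of f.
  by apply: contra ne1 => inM; apply/eqP; apply: (matching_of_at fI.1 xf x1 f1).
have eM' : e \notin matching_of f'.
  by apply: contra ne2 => inM; apply/eqP; apply: (matching_of_at f'I.1 xf' x2 f2).
by rewrite (negbTE eM) (negbTE eM').
Qed.

Lemma at_pair_pentagon a b w : f a != f' a -> f b != f' b ->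
  uniq (nbhd f f' a b) -> w \notin nbhd f f' a b ->
  at_pair y a (f a) + at_pair y b (f' b) = 0.
Proof.
move=> Da Db U wN; set S := pentagon f f' a b w.
have afa : a != f a by rewrite eq_sym fI.2.
have bfb : b != f' b by rewrite eq_sym f'I.2.
have [e1 /andP[ae1 fae1]] := exists_edge afa.
have [e2 /andP[be2 fbe2]] := exists_edge bfb.
have S1 : within S e1 by rewrite (within_ends _ afa ae1 fae1) !inE !eqxx !orbT.
have S2 : within S e2 by rewrite (within_ends _ bfb be2 fbe2) !inE !eqxx !orbT.
have e12 : e1 != e2.
  apply/eqP => E; move: Db; rewrite -(matching_of_ends fI.1 bfb be2 fbe2) -E.
  by rewrite (matching_of_ends fI.1 afa ae1 fae1) eqxx.
have g0 := match_diff_pentagon Da Db wN ae1 fae1 be2 fbe2.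
have y_within : \sum_(e | within S e) y e = 0.
  have g_cut : \sum_(e | in_cut S e) g e = 0.
    rewrite (cut_sum_kerA _ (kerA_match_diff R fI f'I)) (sumr_pair S1 S2 e12 g0).
    rewrite (match_diff_f R fI f'I Da ae1 fae1) (match_diff_f' R fI f'I Db be2 fbe2).
    by rewrite addNr mul0rn oppr0.
  move: (y_cut (pentagon_ineq_row U wN) g_cut); rewrite (cut_sum_kerA _ yA).
  by move/eqP; rewrite oppr_eq0 mulrn_eq0 => /eqP.
rewrite (at_pair_edge _ afa ae1 fae1) (at_pair_edge _ bfb be2 fbe2) -y_within.
by rewrite (sumr_pair S1 S2 e12) // => e Se ne1 ne2; apply/y_edge/g0.
Qed.

Lemma at_pair_const : has_spare_vertex f f' ->
  forall a b, f a != f' a -> f b != f' b -> at_pair y a (f a) = at_pair y b (f b).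
Proof.
move=> spare; apply: (disagreement_const fI f'I (phi := fun x => at_pair y x (f x)) spare).
- by move=> x; rewrite fI.1 at_pairC.
- move=> x Dx; apply: (addIr (at_pair y x (f' x))).
  have := at_pair_degree (disagree_f' fI f'I Dx).
  by rewrite f'I.1 [at_pair y (f' x) x]at_pairC => ->; rewrite at_pair_degree.
- move=> a b w Da Db U wN; apply: (addIr (at_pair y b (f' b))).
  by rewrite (at_pair_pentagon Da Db U wN) at_pair_degree.
Qed.

Lemma match_diff_proportional x0 : has_spare_vertex f f' -> f x0 != f' x0 ->
  forall e, y e = - at_pair y x0 (f x0) * g e.
Proof.
move=> spare Dx0 e; have e1 : incident (val e).1 e by rewrite /incident eqxx.
have e2 : incident (val e).2 e by rewrite /incident eqxx orbT.
have ne := edge_ends_neq e.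
have [eM | eM] := boolP (e \in matching_of f);
  have [eM' | eM'] := boolP (e \in matching_of f').
- have g0 : g e = 0 by apply: match_diff_eq0; rewrite eM eM'.
  by rewrite g0 mulr0 y_edge.
- have fe : f (val e).1 = (val e).2 by move: eM; rewrite inE => /eqP.
  have Da : f (val e).1 != f' (val e).1 by rewrite fe eq_sym; move: eM'; rewrite inE.
  rewrite -fe in e2 ne.
  rewrite (match_diff_f R fI f'I Da e1 e2) mulrN1 opprK -(at_pair_edge y ne e1 e2).
  exact: at_pair_const.
- have fe : f' (val e).1 = (val e).2 by move: eM'; rewrite inE => /eqP.
  have Da : f (val e).1 != f' (val e).1 by rewrite fe; move: eM; rewrite inE.
  rewrite -fe in e2 ne.
  rewrite (match_diff_f' R fI f'I Da e1 e2) mulr1 -(at_pair_edge y ne e1 e2).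
  have := at_pair_degree Da; rewrite (at_pair_const spare Da Dx0).
  by move/eqP; rewrite addrC addr_eq0 => /eqP.
- have g0 : g e = 0 by apply: match_diff_eq0; rewrite (negbTE eM) (negbTE eM').
  by rewrite g0 mulr0 y_edge.
Qed.

End CircuitCriterion.

Lemma circuit_match_diff (R : realType) n (f f' : 'I_n -> 'I_n) :
  fpf_involution f -> fpf_involution f' -> has_spare_vertex f f' ->
  (exists x, f x != f' x) -> circuit (match_diff R f f').
Proof.
move=> fI f'I spare [x0 Dx0]; split; first exact: kerA_match_diff.
have x0f : x0 != f x0 by rewrite eq_sym fI.2.
have [e0 /andP[x0e0 fx0e0]] := exists_edge x0f.
split; first by exists e0; rewrite (match_diff_f R fI f'I Dx0 x0e0 fx0e0) oppr_eq0 oner_eq0.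
move=> y yA [e1 ye1] sub.
have y_edge e : match_diff R f f' e = 0 -> y e = 0.
  move=> ge; apply/eqP; apply: contraT => ye.
  have : inr e \in suppB y by rewrite inE /= oppr_eq0.
  by move/(subsetP sub); rewrite inE /= oppr_eq0 ge eqxx.
have y_cut S : ineq_row (inl S) -> \sum_(e | in_cut S e) match_diff R f f' e = 0 ->
    \sum_(e | in_cut S e) y e = 0.
  move=> rS gS; apply/eqP; apply: contraT => yS.
  have : inl S \in suppB y by rewrite inE rS /= oppr_eq0.
  by move/(subsetP sub); rewrite inE rS /= oppr_eq0 gS eqxx.
have yE := match_diff_proportional fI f'I yA y_edge y_cut spare Dx0.
set k := - _ in yE.
have k0 : k != 0 by apply: contra ye1 => /eqP k0; rewrite yE k0 mul0r.
have -> : y = fun e => k * match_diff R f f' e by apply: functional_extensionality.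
exact: suppB_scale.
Qed.

Lemma circuit_walk_spare (R : realType) n (f f' : 'I_n -> 'I_n) :
  fpf_involution f -> fpf_involution f' -> has_spare_vertex f f' ->
  exists2 l, (l <= 1)%N & circuit_walk l (chi R (matching_of f)) (chi R (matching_of f')).
Proof.
move=> fI f'I spare; have pm := perfect_matching_of fI; have pm' := perfect_matching_of f'I.
have [x0 Dx0 | agree] := pickP (fun x => f x != f' x).
- exists 1%N => //; apply: circuit_walk_step; first exact: chi_in_Pperf.
  apply: circuit_step_chi => //; last by apply: circuit_match_diff => //; exists x0.
  have x0f : x0 != f x0 by rewrite eq_sym fI.2.
  have [e0 /andP[x0e0 fx0e0]] := exists_edge x0f.
  apply/subsetPn; exists e0; first by rewrite (matching_of_ends fI.1 x0f).
  by rewrite (matching_of_ends f'I.1 x0f) // eq_sym.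
- have -> : f' = f by apply: functional_extensionality => x; apply/esym/eqP/negbFE/agree.
  by exists 0%N => //; apply/circuit_walk_refl/chi_in_Pperf.
Qed.

Lemma has_spare_vertex_card n (f f' : 'I_n -> 'I_n) :
  fpf_involution f -> fpf_involution f' ->
  (#|[set x | f x != f' x]| < 8)%N \/ (8 < n)%N -> has_spare_vertex f f'.
Proof.
move=> fI f'I small a b Da Db U.
have [w wN | cover] := pickP (fun w => w \notin nbhd f f' a b); first by exists w.
have Dfa := disagree_f fI f'I Da; have Df'b := disagree_f' fI f'I Db.
case: small; rewrite ltnNge => /negP[].
- have sub : {subset nbhd f f' a b <= enum [set x | f x != f' x]}.
    apply/allP; rewrite /= !mem_enum !inE Da Db Dfa Df'b (disagree_f' fI f'I Da).
    by rewrite (disagree_f' fI f'I Dfa) (disagree_f fI f'I Db) (disagree_f fI f'I Df'b).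
  by rewrite cardE (uniq_leq_size U sub).
- by apply: nbhd_cover_le8 => x; apply: negbFE (cover x).
Qed.

Definition patch n (X : {set 'I_n}) (f f' : 'I_n -> 'I_n) x := if x \in X then f' x else f x.

Lemma patch_fpf_involution n (X : {set 'I_n}) (f f' : 'I_n -> 'I_n) :
  fpf_involution f -> fpf_involution f' ->
  (forall x, x \in X -> (f x \in X) && (f' x \in X)) -> fpf_involution (patch X f f').
Proof.
move=> [ff fN] [ff' f'N] closed; split=> x; rewrite /patch; last by case: ifP.
case xX: (x \in X); first by have /andP[_ ->] := closed x xX; rewrite ff'.
case fxX: (f x \in X); last by rewrite ff.
by have /andP[+ _] := closed _ fxX; rewrite ff xX.
Qed.

Lemma exists_spare_midpoint n (f f' : 'I_n -> 'I_n) :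
  fpf_involution f -> fpf_involution f' ->
  exists2 h, fpf_involution h & has_spare_vertex f h /\ has_spare_vertex h f'.
Proof.
move=> fI f'I; have [spare | not_spare] := classic (has_spare_vertex f f').
  by exists f => //; split => // a b; rewrite eqxx.
have [a [b [Da Db U cover]]] := not_has_spare_vertex not_spare.
have n_le8 := nbhd_cover_le8 cover.
have Q := nbhd_cover_commute fI f'I Da Db U cover.
set X := [set x in [:: a; f a; f' a; f' (f a)]].
have X_closed x : x \in X -> (f x \in X) && (f' x \in X).
  have Q' : f (f' (f a)) = f' a by rewrite -Q fI.1.
  by rewrite !inE => /or4P[]/eqP->; rewrite ?fI.1 ?f'I.1 ?Q ?Q' !eqxx ?orbT.
have aX : a \in X by rewrite !inE eqxx.
have hI := patch_fpf_involution fI f'I X_closed.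
exists (patch X f f') => //.
split; [apply: (has_spare_vertex_card fI hI) | apply: (has_spare_vertex_card hI f'I)]; left.
- apply: (@leq_ltn_trans #|X|).
    apply/subset_leq_card/subsetP => x; rewrite inE /patch.
    by case: (x \in X) => //; rewrite eqxx.
  by rewrite cardsE (leq_ltn_trans (card_size _)).
- apply: (@leq_ltn_trans #|~: X|).
    apply/subset_leq_card/subsetP => x; rewrite inE in_setC /patch.
    by case: (x \in X); rewrite ?eqxx.
  have := cardsC X; have : (0 < #|X|)%N by apply/card_gt0P; exists a.
  rewrite card_ord; lia.
Qed.

Lemma rev_ord_fpf_involution n : ~~ odd n -> fpf_involution (@rev_ord n).
Proof.
move=> ev; split=> [|i]; first exact: rev_ordK.
apply: contra ev => /eqP/(congr1 val) /= E.
have -> : n = (i + i).+1 by have := ltn_ord i; lia.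
by rewrite /= addnn odd_double.
Qed.

Lemma tperm_conj_fpf_involution n (x y : 'I_n) (f : 'I_n -> 'I_n) :
  fpf_involution f -> fpf_involution (fun v => tperm x y (f (tperm x y v))).
Proof.
move=> [ff fN]; split=> v; first by rewrite tpermK ff tpermK.
by apply: contraNneq (fN (tperm x y v)) => {2}<-; rewrite tpermK.
Qed.

Lemma exists_distinct_vertices (R : realType) n : ~~ odd n -> (2 < n)%N ->
  exists x y : edge n -> R, [/\ is_vertex x, is_vertex y & x <> y].
Proof.
move=> ev n3; have fI := rev_ord_fpf_involution ev; set f := @rev_ord n in fI.
pose a : 'I_n := Ordinal (ltn_trans (isT : (0 < 2)%N) n3).
have [b bN | cover] := pickP (fun b => b \notin [:: a; f a]); last first.
  suff : (n <= 2)%N by rewrite leqNgt n3.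
  rewrite -(size_enum_ord n) -[2%N]/(size [:: a; f a]).
  by apply: uniq_leq_size (enum_uniq _) _ => x _; apply: negbFE (cover x).
have f'I := tperm_conj_fpf_involution (f a) b fI.
set f' := fun v => _ in f'I.
exists (chi R (matching_of f)), (chi R (matching_of f')).
split; [exact/chi_is_vertex/perfect_matching_of | exact/chi_is_vertex/perfect_matching_of |].
have afa : a != f a by rewrite eq_sym fI.2.
have [e /andP[ae fae]] := exists_edge afa.
move=> /(congr1 (fun x => x e)); rewrite /chi (matching_of_ends fI.1 afa ae fae).
rewrite (matching_of_ends f'I.1 afa ae fae) eqxx /f' [tperm _ _ a]tpermD; last 2 first.
- by rewrite eq_sym.
- by move: bN; rewrite !inE negb_or eq_sym => /andP[].
rewrite tpermL; move: bN; rewrite !inE negb_or eq_sym => /andP[_ /negbTE ->].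
by move/eqP; rewrite oner_eq0.
Qed.

Definition ord8 (k : nat) : 'I_8 :=
  nth ord0 [:: @Ordinal 8 0 isT; @Ordinal 8 1 isT; @Ordinal 8 2 isT; @Ordinal 8 3 isT;
               @Ordinal 8 4 isT; @Ordinal 8 5 isT; @Ordinal 8 6 isT; @Ordinal 8 7 isT] k.

Definition perm8 (s : seq nat) (x : 'I_8) : 'I_8 := ord8 (nth 0 s x).
Definition pm8_0 := perm8 [:: 1; 0; 3; 2; 5; 4; 7; 6].
Definition pm8_1 := perm8 [:: 3; 2; 1; 0; 5; 4; 7; 6].
Definition pm8_2 := perm8 [:: 3; 2; 1; 0; 7; 6; 5; 4].

Lemma pm8_fpf_involution :
  [/\ fpf_involution pm8_0, fpf_involution pm8_1 & fpf_involution pm8_2].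
Proof.
have fpf (p : 'I_8 -> 'I_8) : (forall x, (p (p x) == x) && (p x != x)) -> fpf_involution p.
  by move=> pP; split=> x; have /andP[/eqP ? ?] := pP x.
by split; apply: fpf; case=> [[|[|[|[|[|[|[|[|//]]]]]]]] ?].
Qed.

Lemma pm8_cut (T : {set 'I_8}) : odd #|T| ->
  (\sum_(x in T) (pm8_2 x \notin T) = \sum_(x in T) (pm8_0 x \notin T))%N ->
  (\sum_(x in T) (pm8_1 x \notin T) = \sum_(x in T) (pm8_0 x \notin T))%N.
Proof.
pose bit k := (inord k : 'I_8) \in T.
have bitE (x : 'I_8) : (x \in T) = bit x by rewrite /bit inord_val.
have sumE (F : 'I_8 -> nat) :
    (\sum_(x in T) F x = \sum_(i < 8) (if bit i then F i else 0))%N.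
  by rewrite big_mkcond; apply: eq_bigr => x _; rewrite bitE.
rewrite -sum1_card !sumE !big_ord_recl !big_ord0 !bitE /= /bump /= ?add1n ?addn0.
by move: (bit 0) (bit 1) (bit 2) (bit 3) (bit 4) (bit 5) (bit 6) (bit 7)
  => [] [] [] [] [] [] [] [].
Qed.

Lemma pm8_1_between x : (pm8_1 x == pm8_0 x) || (pm8_1 x == pm8_2 x).
Proof. by case: x => [[|[|[|[|[|[|[|[|//]]]]]]]] ?]. Qed.

Lemma not_circuit_pm8 (R : realType) : ~ circuit (match_diff R pm8_0 pm8_2).
Proof.
have [I0 I1 I2] := pm8_fpf_involution.
case=> _ [_ minimal].
have o01 : ord8 0 != ord8 1 by [].
have [e01 /andP[e01a e01b]] := exists_edge o01.
have o45 : ord8 4 != ord8 5 by [].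
have [e45 /andP[e45a e45b]] := exists_edge o45.
have chi01 p : involutive p -> chi R (matching_of p) e01 = (p (ord8 0) == ord8 1)%:R.
  by move=> pp; apply: chi_matching_of_ends.
have chi45 p : involutive p -> chi R (matching_of p) e45 = (p (ord8 4) == ord8 5)%:R.
  by move=> pp; apply: chi_matching_of_ends.
have nz : nonzero (match_diff R pm8_0 pm8_1).
  exists e01; rewrite /match_diff (chi01 _ I0.1) (chi01 _ I1.1) /=.
  by rewrite sub0r oppr_eq0 oner_eq0.
have sub : suppB (match_diff R pm8_0 pm8_1) \subset suppB (match_diff R pm8_0 pm8_2).
  apply/subsetP => r; rewrite !inE => /andP[rr]; rewrite rr /=; case: r rr => [T|e] /= rT.
    rewrite !oppr_eq0 /match_diff !sumrB (cut_sum_chi _ _ I0) (cut_sum_chi _ _ I1).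
    rewrite (cut_sum_chi _ _ I2) !subr_eq0 !eqr_nat; apply: contra_neq.
    by apply: pm8_cut; case/andP: rT.
  rewrite !oppr_eq0 /match_diff /chi !inE.
  by case/orP: (pm8_1_between (val e).1) => /eqP ->; rewrite ?subrr ?eqxx.
have := minimal _ (kerA_match_diff R I0 I1) nz sub => /setP /(_ (inr e45)).
rewrite !inE /= /match_diff (chi45 _ I0.1) (chi45 _ I1.1) (chi45 _ I2.1) /=.
by rewrite subrr oppr0 eqxx sub0r !oppr_eq0 oner_eq0.
Qed.

Lemma far_vertices8 (R : realType) : exists x y : edge 8 -> R,
  [/\ is_vertex x, is_vertex y & forall l, (l < 2)%N -> ~ circuit_walk l x y].
Proof.
have [I0 _ I2] := pm8_fpf_involution.
exists (chi R (matching_of pm8_0)), (chi R (matching_of pm8_2)).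
split; [exact/chi_is_vertex/perfect_matching_of | exact/chi_is_vertex/perfect_matching_of |].
case=> [|[|//]] _ walk; last first.
  by apply: not_circuit_pm8; exact: circuit_step_diff (circuit_walk1_step walk).
have o01 : ord8 0 != ord8 1 by [].
have [e01 /andP[e01a e01b]] := exists_edge o01.
move: (congr1 (fun x => x e01) (circuit_walk0_eq walk)) => /=.
rewrite (chi_matching_of_ends R I0.1 o01 e01a e01b).
by rewrite (chi_matching_of_ends R I2.1 o01 e01a e01b) /= => /eqP; rewrite oner_eq0.
Qed.

Theorem theorem2 (R : realType) (n : nat) :
  ~~ odd n -> (4 <= n)%N ->
  circuit_diameter_Pperf R n (if n == 8%N then 2%N else 1%N).
Proof.
move=> ev n4; split.
  move=> x y /vertex_is_chi[M pm ->] /vertex_is_chi[M' pm' ->].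
  have [f fI ->] := perfect_matching_involution pm.
  have [f' f'I ->] := perfect_matching_involution pm'.
  case: eqP => [n8 | n_neq8].
    have [h hI [spare1 spare2]] := exists_spare_midpoint fI f'I.
    have [l1 l1_le1 walk1] := circuit_walk_spare R fI hI spare1.
    have [l2 l2_le1 walk2] := circuit_walk_spare R hI f'I spare2.
    by exists (l1 + l2)%N; [lia | exact: circuit_walk_cat walk1 walk2].
  apply: circuit_walk_spare => //; apply: has_spare_vertex_card => //.
  case: (ltngtP n 8) => [n_lt8 | n_gt8 | //]; [left | by right].
  by rewrite (leq_ltn_trans (max_card _)) ?card_ord.
case: eqP => [-> | _]; first by have [x [y [? ? ?]]] := far_vertices8 R; exists x, y.
have [x [y [vx vy xy]]] := exists_distinct_vertices R ev (ltnW n4).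
exists x, y; do 2 split=> //; move=> l; rewrite ltnS leqn0 => /eqP -> /circuit_walk0_eq.
exact: xy.
Qed.
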